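(* Let $n$ be a natural number with prime factorisation $n=p_1^{\alpha_1}\cdots p_t^{\alpha_t}$. The following are equivalent: (1) every sb-solution of cardinality $n$ is a flip solution; (2) every skew brace of order $n$ is a trivial brace; (3) every skew brace of order $n$ is trivial; (4) every skew brace of order $n$ is almost trivial; (5) every skew brace of order $n$ is weakly trivial; (6) every skew brace of order $n$ is one-generator; (7) $\alpha_i=1$ for every $i$, and $p_i$ does not divide $p_j-1$ for all $i\neq j$.
   Context: A skew brace is a set $A$ with two group structures $(A,+)$ and $(A,\circ)$ such that $a\circ(b+c)=a\circ b-a+a\circ c$ for all $a,b,c\in A$; its order is $|A|$. It is a brace if $(A,+)$ is abelian. Put $\lambda_a(b)=-a+a\circ b$ and $a*b=-a+a\circ b-b$. $A$ is trivial if $a\circ b=a+b$ for all $a,b$; almost trivial if $a\circ b=b+a$ for all $a,b$. Let $A^2$ be the subgroup of $(A,+)$ generated by all $a*b$, and let $A_{\mathrm{op}}=(A,+_{\mathrm{op}},\circ)$ with $a+_{\mathrm{op}}b=b+a$ (the opposite skew brace), with $A_{\mathrm{op}}^2$ defined analogously using $+_{\mathrm{op}}$; $A$ is weakly trivial if $A^2\cap A_{\mathrm{op}}^2=\{0\}$. A sub-skew brace is a subset that is a subgroup of both $(A,+)$ and $(A,\circ)$; $A$ is one-generator if there is $a\in A$ such that the smallest sub-skew brace containing $a$ is $A$. A (non-degenerate set-theoretic) solution of the Yang--Baxter equation is a pair $(X,r)$ with $r(x,y)=(\lambda_x(y),\rho_y(x))$ a bijection of $X\times X$ satisfying $r_{12}r_{23}r_{12}=r_{23}r_{12}r_{23}$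 ($r_{12}=r\times\mathrm{id}_X$, $r_{23}=\mathrm{id}_X\times r$) with all $\lambda_x,\rho_x$ bijective. An sb-solution of cardinality $n$ is a solution isomorphic to $(A,r_A)$ for a skew brace $A$ of order $n$, where $r_A(a,b)=(\lambda_a(b),\lambda_a(b)^{-1}\circ a\circ b)$ (inverse in $(A,\circ)$). A flip solution is one with $r(x,y)=(y,x)$ for all $x,y$. *)

From mathcomp Require Import all_boot.
Set Implicit Arguments. Unset Strict Implicit. Unset Printing Implicit Defensive.

Record skew_brace (T : Type) := SkewBrace {
  sb_add : T -> T -> T;
  sb_zero : T;
  sb_opp : T -> T;
  sb_comp : T -> T -> T;
  sb_one : T;
  sb_inv : T -> T;
  sb_addA : forall a b c, sb_add a (sb_add b c) = sb_add (sb_add a b) c;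
  sb_add0 : forall a, sb_add sb_zero a = a;
  sb_addN : forall a, sb_add (sb_opp a) a = sb_zero;
  sb_compA : forall a b c, sb_comp a (sb_comp b c) = sb_comp (sb_comp a b) c;
  sb_comp1 : forall a, sb_comp sb_one a = a;
  sb_compV : forall a, sb_comp (sb_inv a) a = sb_one;
  sb_compatible : forall a b c,
    sb_comp a (sb_add b c) = sb_add (sb_add (sb_comp a b) (sb_opp a)) (sb_comp a c)
}.

Section SkewBraceDefs.
Variables (T : Type) (A : skew_brace T).
Local Notation "a + b" := (sb_add A a b).
Local Notation "- a" := (sb_opp A a).
Local Notation "a \o b" := (sb_comp A a b).

Definition sb_lambda (a b : T) : T := - a + (a \o b).

Definition star_with (add : T -> T -> T) (opp : T -> T) (a b : T) : T :=
  add (add (opp a) (sb_comp A a b)) (opp b).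

Inductive sq_with (add : T -> T -> T) (opp : T -> T) (zero : T) : T -> Prop :=
  | sq_gen a b : sq_with add opp zero (star_with add opp a b)
  | sq_zero : sq_with add opp zero zero
  | sq_add x y : sq_with add opp zero x -> sq_with add opp zero y ->
                 sq_with add opp zero (add x y)
  | sq_opp x : sq_with add opp zero x -> sq_with add opp zero (opp x).

Definition sb_sq : T -> Prop := sq_with (sb_add A) (sb_opp A) (sb_zero A).
(* A_op^2 : same, for the opposite skew brace (a +op b = b + a; same
   inverse and zero) *)
Definition sb_op_sq : T -> Prop :=
  sq_with (fun a b => sb_add A b a) (sb_opp A) (sb_zero A).

Definition sb_is_brace : Prop := forall a b, a + b = b + a.
Definition sb_trivial : Prop := forall a b, a \o b = a + b.
Definition sb_trivial_brace : Prop := sb_is_brace /\ sb_trivial.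
Definition sb_almost_trivial : Prop := forall a b, a \o b = b + a.
Definition sb_weakly_trivial : Prop :=
  forall x, sb_sq x -> sb_op_sq x -> x = sb_zero A.

Definition sub_skew_brace (S : T -> Prop) : Prop :=
  [/\ S (sb_zero A), (forall x y, S x -> S y -> S (x + y)) &
      (forall x, S x -> S (- x))] /\
  [/\ S (sb_one A), (forall x y, S x -> S y -> S (x \o y)) &
      (forall x, S x -> S (sb_inv A x))].

Definition sb_one_generator : Prop :=
  exists a : T, forall S, sub_skew_brace S -> S a -> forall x, S x.

Definition sb_solution (p : T * T) : T * T :=
  let: (a, b) := p in
  (sb_lambda a b, sb_comp A (sb_comp A (sb_inv A (sb_lambda a b)) a) b).

End SkewBraceDefs.

Definition r12 (X : Type) (r : X * X -> X * X) (t : X * X * X) : X * X * X :=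
  let: (x, y, z) := t in let: (u, v) := r (x, y) in (u, v, z).
Definition r23 (X : Type) (r : X * X -> X * X) (t : X * X * X) : X * X * X :=
  let: (x, y, z) := t in let: (u, v) := r (y, z) in (x, u, v).

(* non-degenerate set-theoretic solution; r(x,y) = (lambda_x(y), rho_y(x)) *)
Definition is_solution (X : Type) (r : X * X -> X * X) : Prop :=
  [/\ bijective r,
      (forall t, r12 r (r23 r (r12 r t)) = r23 r (r12 r (r23 r t))),
      (forall x, bijective (fun y => (r (x, y)).1)) &
      (forall y, bijective (fun x => (r (x, y)).2))].

Definition sol_iso (X Y : Type) (r : X * X -> X * X) (s : Y * Y -> Y * Y) :=
  exists f : X -> Y, bijective f /\
    forall x y, s (f x, f y) = (f (r (x, y)).1, f (r (x, y)).2).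

Definition sb_solution_of_card (n : nat) (X : Type) (r : X * X -> X * X) :=
  is_solution r /\
  exists (T : finType) (A : skew_brace T), #|T| = n /\ sol_iso r (sb_solution A).

Definition flip_solution (X : Type) (r : X * X -> X * X) : Prop :=
  forall x y, r (x, y) = (y, x).

(* Under (7) every group of order n is cyclic.  In a minimal counterexample G
   all proper subgroups and quotients are cyclic; if G is not
   abelian it has a nontrivial proper normal subgroup N (its centre, a normal
   maximal subgroup, or the kernel of the Frobenius group with an abelian
   maximal complement), and G acts trivially on N since #|Aut N| = totient #|N|
   is coprime to #|G|, so G is abelian after all.  Hence for a skew brace A of
   order n the group (A,+) is cyclic, and each lambda_a is an automorphism of
   (A,+) whose order divides both #|A| and totient #|A|, so A is a trivial
   brace: its solution is the flip, and a generator of (A,+) generates A.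
   Conversely, if p^2 divides n then a o b = a + b + c a b with c^2 = 0 on Z_n
   and the trivial brace on Z_p x Z_(n/p) are counterexamples to (5) and (6);
   if p divides q - 1 for primes p, q dividing n, so are the braces on
   Z_q x Z_(n/q) whose multiplicative (resp. both) groups are semidirect. *)

From HB Require Import structures.
From mathcomp Require Import all_boot all_fingroup all_algebra.
From mathcomp Require Import pgroup cyclic center sylow nilpotent frobenius.
From mathcomp Require vcharacter.
From mathcomp Require Import ring zify.
From Stdlib Require Import Classical.
Set Implicit Arguments. Unset Strict Implicit. Unset Printing Implicit Defensive.

(* Condition (7), equivalently coprime n (totient n): the orders n for which
   every group of order n is cyclic. *)
Definition cyclic_number (n : nat) : Prop :=
  (forall p, prime p -> p %| n -> logn p n = 1) /\
  (forall p q, prime p -> prime q -> p %| n -> q %| n -> p != q -> ~~ (p %| q.-1)).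

Lemma cyclic_number_logn n p : 0 < n -> cyclic_number n -> logn p n <= 1.
Proof.
move=> n_gt0 [sqf _]; case: (posnP (logn p n)) => [-> // | ].
by rewrite logn_gt0 mem_primes n_gt0 /= => /andP[pr_p /(sqf _ pr_p)->].
Qed.

Lemma cyclic_number_dvd n d : 0 < n -> cyclic_number n -> d %| n -> cyclic_number d.
Proof.
move=> n_gt0 cn dn; have d_gt0 := dvdn_gt0 n_gt0 dn.
split=> [p pr_p pd | p q pr_p pr_q pd qd].
  apply/eqP; rewrite eqn_leq logn_gt0 mem_primes pr_p d_gt0 pd /= andbT.
  exact: leq_trans (dvdn_leq_log p n_gt0 dn) (cyclic_number_logn p n_gt0 cn).
by apply: cn.2; rewrite ?(dvdn_trans _ dn).
Qed.

Lemma cyclic_number_coprime_totient n d :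
  0 < n -> cyclic_number n -> d %| n -> coprime n (totient d).
Proof.
move=> n_gt0 cn dn; have d_gt0 := dvdn_gt0 n_gt0 dn.
have [sqf_d _] := cyclic_number_dvd n_gt0 cn dn.
rewrite coprime_has_primes ?totient_gt0 //; apply/hasPn => r.
rewrite !mem_primes totient_gt0 d_gt0 n_gt0 /= => /andP[pr_r].
rewrite totientE // Euclid_dvd_prod // big_has => /hasP[p].
rewrite mem_primes d_gt0 /= => /andP[pr_p pd]; rewrite sqf_d // muln1 => r_p1.
apply/negP => /andP[_ rn]; have [r_p | ] := eqVneq r p.
  move: r_p1 (coprimenP (prime_gt0 pr_p)); rewrite r_p /coprime => /gcdn_idPl->.
  by rewrite gtn_eqF ?prime_gt1.
by move/(cn.2 r p pr_r pr_p rn (dvdn_trans pd dn)); rewrite r_p1.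
Qed.

Section CyclicNumberGroups.
Variable gT : finGroupType.
Implicit Types G H M : {group gT}.
Local Open Scope group_scope.

Lemma abelian_logn_cyclic G :
  abelian G -> (forall p, logn p #|G| <= 1) -> cyclic G.
Proof.
move=> abG sqf; apply: nil_Zgroup_cyclic (abelian_nil abG).
apply/forall_inP => S /SylowP[p pr_p /card_Hall]; rewrite p_part.
case: (logn p #|G|) (sqf p) => [|[|]] // _ cardS.
  by rewrite (card1_trivg cardS) cyclic1.
by apply: prime_cyclic; rewrite cardS.
Qed.

(* G acts on the cyclic group H through Aut H, whose order totient #|H| is
   coprime to #|G|; so H is central, and G / H is cyclic. *)
Lemma cyclic_extension_abelian G H :
  H <| G -> cyclic H -> cyclic (G / H) -> coprime #|G| (totient #|H|) ->
  abelian G.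
Proof.
move=> /andP[sHG nHG] cycH cycGH coGH; apply: cyclic_factor_abelian cycGH.
have /card1_trivg conj_trivial : #|conj_aut H @* G| = 1%N.
  apply/eqP; rewrite -dvdn1 -(eqnP coGH) dvdn_gcd dvdn_morphim /=.
  by rewrite -(card_Aut_cyclic cycH) cardSg // Aut_conj_aut.
have : G \subset 'ker (conj_aut H).
  apply/subsetP => x Gx; have Nx := subsetP nHG x Gx; apply/kerP => //.
  by have := mem_morphim (conj_aut H) Nx Gx; rewrite conj_trivial => /set1P.
by rewrite ker_conj_aut subsetI sHG centsC.
Qed.

Section MaximalSubgroup.
Variables (G M : {group gT}).
Hypotheses (maxM : [max M of H | H \proper G]) (not_nMG : ~~ (M <| G)).

Lemma maximal_nonnormal_self_normalizing : 'N_G(M) = M.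
Proof.
have [prMG maxM'] := maxgroupP maxM; have sMG := proper_sub prMG.
apply: maxM'; last by rewrite subsetI sMG normG.
rewrite properEneq subsetIl andbT; apply: contra not_nMG => /eqP defG.
by rewrite /normal sMG -defG subsetIr.
Qed.

Lemma maximal_nonnormal_join_conjugate g : g \in G -> g \notin M -> M <*> M :^ g = G.
Proof.
move=> Gg notMg; have [prMG maxM'] := maxgroupP maxM; have sMG := proper_sub prMG.
have sMgG : M :^ g \subset G by rewrite -(conjGid Gg) conjSg.
apply/eqP; rewrite eqEsubset join_subG sMG sMgG /=; apply/negPn/negP => nsub.
have prJ : (M <*> M :^ g)%G \proper G.
  rewrite properEneq /= join_subG sMG sMgG /= andbT.
  by apply: contraNneq nsub => ->.
have defJ := maxM' _ prJ (joing_subl _ _).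
have nMg : g \in 'N_G(M).
  by rewrite inE Gg inE -{2}[gval M]defJ joing_subr.
by move: nMg; rewrite maximal_nonnormal_self_normalizing (negPf notMg).
Qed.

(* A nontrivial element of M :&: M :^ g, with g outside M, would centralize
   M <*> M :^ g = G. *)
Lemma abelian_maximal_Frobenius_complement :
  'Z(G) = 1 -> abelian M -> M :!=: 1 -> [Frobenius G with complement M].
Proof.
move=> Z1 abM ntM; have [prMG _] := maxgroupP maxM; have sMG := proper_sub prMG.
apply/andP; split; first exact: proper_neq prMG.
apply/normedTI_memJ_P; split=> //; first by rewrite setD_eq0 subG1.
move=> a g; rewrite !inE => /andP[nt_a Ma] Gg.
apply/idP/idP => [/andP[_ Mag] | Mg]; last by rewrite conjg_eq1 nt_a groupJ.
apply: contraT => notMg; have : a ^ g \in 'Z(G).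
  rewrite inE groupJ ?(subsetP sMG a Ma) //=.
  suff : a ^ g \in 'C(M <*> M :^ g) by rewrite maximal_nonnormal_join_conjugate.
  have abMg : abelian (M :^ g) by rewrite abelianJ.
  by rewrite centY inE (subsetP abM) //= (subsetP abMg) ?memJ_conjg.
by rewrite Z1 inE conjg_eq1 (negPf nt_a).
Qed.

End MaximalSubgroup.

Lemma minimal_nonabelian_proper_normal G :
  (forall H, H \proper G -> abelian H) -> ~~ abelian G ->
  exists N : {group gT}, [/\ N <| G, N :!=: 1 & N \proper G].
Proof.
move=> abProper nabG; have [Z1 | ntZ] := eqVneq 'Z(G) 1; last first.
  exists 'Z(G)%G; split; rewrite ?center_normal //.
  by rewrite properEneq center_sub andbT; apply: contraNneq nabG => /center_idP.
have ntG : G :!=: 1 by apply: contraNneq nabG => ->; apply: abelian1.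
have [x Gx ntx] := trivgPn _ ntG.
have prX : <[x]> \proper G.
  rewrite properEneq cycle_subG Gx andbT.
  by apply: contraNneq nabG => <-; apply: cycle_abelian.
have [M maxM sXM] := @maxgroup_exists _ (fun H => H \proper G) _ prX.
have [prMG _] := maxgroupP maxM.
have ntM : M :!=: 1 by apply/trivgPn; exists x; rewrite -?cycle_subG.
have [nMG | not_nMG] := boolP (M <| G); first by exists M.
have frobM := abelian_maximal_Frobenius_complement maxM not_nMG Z1 (abProper M prMG) ntM.
have [K /andP[/eqP defG _]] := vcharacter.Frobenius_kernel_exists frobM.
have [nKG _ defKM _ tiKM] := sdprod_context defG.
exists K; split=> //.
  by apply: contraNneq (proper_neq prMG) => K1; rewrite -defKM K1 mul1g.
rewrite properEneq normal_sub // andbT; apply: contraNneq ntM => defK.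
by rewrite -(setIidPr (proper_sub prMG)) -defK tiKM.
Qed.

End CyclicNumberGroups.

Theorem cyclic_number_cyclic (gT : finGroupType) (G : {group gT}) :
  cyclic_number #|G| -> cyclic G.
Proof.
move: {2}#|G| (leqnn #|G|) => k; elim: k gT G => [|k IHk] gT G leGk cnG.
  by move: leGk; rewrite leqNgt cardG_gt0.
have IH (hT : finGroupType) (H : {group hT}) : #|H| < #|G| -> #|H| %| #|G| -> cyclic H.
  move=> ltHG dvHG; apply: IHk; first by rewrite -ltnS (leq_trans ltHG).
  exact: cyclic_number_dvd (cardG_gt0 G) cnG dvHG.
have [abG | nabG] := boolP (abelian G).
  by apply: abelian_logn_cyclic => // p; apply: cyclic_number_logn.
have [N [nNG ntN prNG]] : exists N : {group gT}, [/\ N <| G, N :!=: 1 & N \proper G]%g.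
  apply: minimal_nonabelian_proper_normal nabG => H prHG.
  by apply/cyclic_abelian/IH; rewrite ?proper_card ?cardSg ?proper_sub.
have sNG := proper_sub prNG.
have cycN : cyclic N by apply: IH; rewrite ?proper_card ?cardSg.
have cycGN : cyclic (G / N).
  by apply: IH; rewrite ?ltn_quotient ?card_quotient ?normal_norm ?dvdn_indexg.
have coGN := cyclic_number_coprime_totient (cardG_gt0 G) cnG (cardSg sNG).
by rewrite (cyclic_extension_abelian nNG cycN cycGN coGN) in nabG.
Qed.

(* The carrier of a skew brace is an arbitrary Type, so the group laws of
   (A,+) and (A,o) are derived here from the left-sided axioms. *)
Section GroupAxioms.
Variables (T : Type) (mul : T -> T -> T) (one : T) (inv : T -> T).
Hypotheses (mulA : forall a b c, mul a (mul b c) = mul (mul a b) c)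
           (mul1 : forall a, mul one a = a) (mulV : forall a, mul (inv a) a = one).

Lemma ax_mulKr a b : mul (inv a) (mul a b) = b.
Proof. by rewrite mulA mulV mul1. Qed.

Lemma ax_mulrV a : mul a (inv a) = one.
Proof.
have idem : mul (mul a (inv a)) (mul a (inv a)) = mul a (inv a).
  by rewrite -mulA ax_mulKr.
by rewrite -(ax_mulKr (mul a (inv a)) (mul a (inv a))) idem mulV.
Qed.

Lemma ax_mulr1 a : mul a one = a.
Proof. by rewrite -(mulV a) mulA ax_mulrV mul1. Qed.

Lemma ax_mulVKr a b : mul a (mul (inv a) b) = b.
Proof. by rewrite mulA ax_mulrV mul1. Qed.

Lemma ax_mulrK a b : mul (mul a b) (inv b) = a.
Proof. by rewrite -mulA ax_mulrV ax_mulr1. Qed.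

Lemma ax_mulrVK a b : mul (mul a (inv b)) b = a.
Proof. by rewrite -mulA mulV ax_mulr1. Qed.

Lemma ax_mulrI a : injective (mul a).
Proof. exact: can_inj (ax_mulKr a). Qed.

Lemma ax_mulIr a : injective (mul^~ a).
Proof. by apply: (can_inj (g := mul^~ (inv a))) => b; apply: ax_mulrK. Qed.

Lemma ax_invK a : inv (inv a) = a.
Proof. by apply: (@ax_mulrI (inv a)); rewrite ax_mulrV mulV. Qed.

Lemma ax_invM a b : inv (mul a b) = mul (inv b) (inv a).
Proof. by apply: (@ax_mulrI (mul a b)); rewrite ax_mulrV -mulA ax_mulVKr ax_mulrV. Qed.

Lemma ax_inv1 : inv one = one.
Proof. by rewrite -{2}(mulV one) ax_mulr1. Qed.

End GroupAxioms.

Section SkewBraceTheory.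
Variables (T : Type) (A : skew_brace T).
Local Notation "a + b" := (sb_add A a b).
Local Notation "- a" := (sb_opp A a).
Local Notation "a - b" := (sb_add A a (sb_opp A b)).
Local Notation "a ∘ b" := (sb_comp A a b) (at level 40, left associativity).
Local Notation "0" := (sb_zero A).
Local Notation "1" := (sb_one A).
Local Notation inv := (sb_inv A).
Local Notation lambda := (sb_lambda A).

Let addA := @sb_addA _ A.
Let add0 := @sb_add0 _ A.
Let addN := @sb_addN _ A.
Let compA := @sb_compA _ A.
Let comp1 := @sb_comp1 _ A.
Let compV := @sb_compV _ A.

Lemma sb_addKr a b : - a + (a + b) = b. Proof. exact: ax_mulKr. Qed.
Lemma sb_addNKr a b : a + (- a + b) = b. Proof. exact: ax_mulVKr. Qed.
Lemma sb_addrK a b : a + b - b = a. Proof. exact: ax_mulrK. Qed.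
Lemma sb_addrNK a b : a - b + b = a. Proof. exact: ax_mulrVK. Qed.
Lemma sb_addrN a : a - a = 0. Proof. exact: ax_mulrV. Qed.
Lemma sb_addr0 a : a + 0 = a. Proof. exact: ax_mulr1. Qed.
Lemma sb_addrI a : injective (sb_add A a). Proof. exact: ax_mulrI. Qed.
Lemma sb_addIr a : injective (sb_add A^~ a). Proof. exact: ax_mulIr. Qed.
Lemma sb_oppK a : - - a = a. Proof. exact: ax_invK. Qed.
Lemma sb_oppD a b : - (a + b) = - b - a. Proof. exact: ax_invM. Qed.
Lemma sb_opp0 : - 0 = 0. Proof. exact: ax_inv1. Qed.

Lemma sb_compKr a b : inv a ∘ (a ∘ b) = b. Proof. exact: ax_mulKr. Qed.
Lemma sb_compVKr a b : a ∘ (inv a ∘ b) = b. Proof. exact: ax_mulVKr. Qed.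
Lemma sb_comprV a : a ∘ inv a = 1. Proof. exact: ax_mulrV. Qed.
Lemma sb_comprI a : injective (sb_comp A a). Proof. exact: ax_mulrI. Qed.
Lemma sb_compIr a : injective (sb_comp A^~ a). Proof. exact: ax_mulIr. Qed.

Lemma sb_compDr a b c : a ∘ (b + c) = a ∘ b - a + a ∘ c.
Proof. exact: sb_compatible. Qed.

Lemma sb_compr0 a : a ∘ 0 = a.
Proof.
have := sb_compDr a 0 0; rewrite add0 => idem.
apply: (@sb_addIr (- a)); rewrite sb_addrN; apply: (@sb_addIr (a ∘ 0)).
by rewrite add0 -idem.
Qed.

Lemma sb_one_zero : 1 = 0.
Proof. by rewrite -(comp1 0) sb_compr0. Qed.

Lemma sb_inv0 : inv 0 = 0.
Proof. by rewrite -(sb_compr0 (inv 0)) compV sb_one_zero. Qed.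

Lemma sb_compE a b : a ∘ b = a + lambda a b.
Proof. by rewrite /sb_lambda sb_addNKr. Qed.

Lemma sb_compNr a b : a ∘ - b = a - a ∘ b + a.
Proof.
apply: (@sb_addrI (a ∘ b - a)); rewrite -sb_compDr sb_addrN sb_compr0.
by rewrite -!addA sb_addKr sb_addNKr.
Qed.

Lemma sb_lambdaD a b c : lambda a (b + c) = lambda a b + lambda a c.
Proof. by rewrite /sb_lambda sb_compDr !addA. Qed.

Lemma sb_lambda0 b : lambda 0 b = b.
Proof. by rewrite /sb_lambda -sb_one_zero comp1 sb_one_zero sb_opp0 add0. Qed.

Lemma sb_lambdaM a b c : lambda (a ∘ b) c = lambda a (lambda b c).
Proof.
rewrite /sb_lambda sb_compDr sb_compNr -compA sb_addrK.
by rewrite -[a - _ + _]addA sb_addKr.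
Qed.

Lemma sb_lambdaK a b : lambda (inv a) (lambda a b) = b.
Proof. by rewrite -sb_lambdaM compV sb_one_zero sb_lambda0. Qed.

Lemma sb_lambdaVK a b : lambda a (lambda (inv a) b) = b.
Proof. by rewrite -sb_lambdaM sb_comprV sb_one_zero sb_lambda0. Qed.

Definition sb_rho b a := inv (lambda a b) ∘ a ∘ b.

Lemma sb_solutionE a b : sb_solution A (a, b) = (lambda a b, sb_rho b a).
Proof. by []. Qed.

Lemma sb_lambda_rho a b : lambda a b ∘ sb_rho b a = a ∘ b.
Proof. by rewrite /sb_rho -compA sb_compVKr. Qed.

Lemma sb_rhoM x y z : sb_rho z (sb_rho y x) = sb_rho (y ∘ z) x.
Proof.
have lambda_comp : lambda x (y ∘ z) = lambda x y ∘ lambda (sb_rho y x) z.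
  rewrite [y ∘ z]sb_compE sb_lambdaD -sb_lambdaM [RHS]sb_compE.
  by rewrite -sb_lambdaM sb_lambda_rho.
apply: (@sb_comprI (lambda x (y ∘ z))).
by rewrite sb_lambda_rho {1}lambda_comp -compA sb_lambda_rho compA sb_lambda_rho compA.
Qed.

Lemma sb_rho0 a : sb_rho 0 a = a.
Proof. by rewrite /sb_rho /sb_lambda !sb_compr0 addN sb_inv0 -sb_one_zero comp1. Qed.

Lemma sb_rhoK a b : sb_rho (inv b) (sb_rho b a) = a.
Proof. by rewrite sb_rhoM sb_comprV sb_one_zero sb_rho0. Qed.

Lemma sb_rhoVK a b : sb_rho b (sb_rho (inv b) a) = a.
Proof. by rewrite sb_rhoM compV sb_one_zero sb_rho0. Qed.

Lemma sb_solution_bij : bijective (sb_solution A).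
Proof.
pose unsolve (p : T * T) := let: (u, v) := p in
  let c := u ∘ v in let a := c - u in (a, inv a ∘ c).
exists unsolve => [[a b] | [u v]]; rewrite /unsolve sb_solutionE.
  rewrite sb_lambda_rho /sb_lambda sb_oppD sb_oppK sb_addNKr.
  by rewrite sb_compKr.
have lambda_u : lambda (u ∘ v - u) (inv (u ∘ v - u) ∘ (u ∘ v)) = u.
  by rewrite /sb_lambda sb_compVKr sb_oppD sb_oppK sb_addrNK.
by rewrite lambda_u /sb_rho lambda_u -compA sb_compVKr sb_compKr.
Qed.

Lemma sb_solution_braid t :
  r12 (sb_solution A) (r23 (sb_solution A) (r12 (sb_solution A) t)) =
  r23 (sb_solution A) (r12 (sb_solution A) (r23 (sb_solution A) t)).
Proof.
case: t => [[x y] z]; rewrite /r12 /r23 !sb_solutionE.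
have left_eq : lambda (lambda x y) (lambda (sb_rho y x) z) = lambda x (lambda y z).
  by rewrite -!sb_lambdaM sb_lambda_rho.
have right_eq : sb_rho z (sb_rho y x) = sb_rho (sb_rho z y) (sb_rho (lambda y z) x).
  by rewrite !sb_rhoM sb_lambda_rho.
have middle_eq : sb_rho (lambda (sb_rho y x) z) (lambda x y) =
          lambda (sb_rho (lambda y z) x) (sb_rho z y).
  apply: (@sb_comprI (lambda (lambda x y) (lambda (sb_rho y x) z))).
  apply: (@sb_compIr (sb_rho z (sb_rho y x))).
  rewrite sb_lambda_rho -compA sb_lambda_rho compA sb_lambda_rho.
  rewrite left_eq right_eq -[in RHS]compA sb_lambda_rho [in RHS]compA sb_lambda_rho.
  by rewrite -[in RHS]compA sb_lambda_rho compA.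
by rewrite left_eq middle_eq right_eq.
Qed.

Lemma sb_solution_is_solution : is_solution (sb_solution A).
Proof.
split; [exact: sb_solution_bij | exact: sb_solution_braid | |].
  by move=> x; exists (lambda (inv x)) => y /=; rewrite ?sb_lambdaK ?sb_lambdaVK.
by move=> y; exists (sb_rho (inv y)) => x; rewrite /= -/(sb_rho _ _) ?sb_rhoK ?sb_rhoVK.
Qed.

Lemma sb_trivial_inv : sb_trivial A -> forall a, inv a = - a.
Proof. by move=> trA a; apply: (@sb_addIr a); rewrite addN -trA compV sb_one_zero. Qed.

Lemma sb_flip_trivial_brace : flip_solution (sb_solution A) <-> sb_trivial_brace A.
Proof.
split=> [flipA | [braceA trA] a b].
  have trA : sb_trivial A.
    by move=> a b; have [lambda_ab _] := flipA a b; rewrite sb_compE lambda_ab.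
  split=> // a b; have [lambda_ba rho_ab] := flipA b a.
  move: rho_ab; rewrite /sb_rho lambda_ba sb_trivial_inv // !trA.
  move/(congr1 (sb_add A a)).
  by rewrite -!addA sb_addNKr.
have lambda_ab : lambda a b = b by rewrite /sb_lambda trA sb_addKr.
rewrite sb_solutionE /sb_rho lambda_ab sb_trivial_inv // !trA.
by rewrite [- b + a]braceA sb_addrNK.
Qed.

Definition sb_op : skew_brace T :=
  @SkewBrace T (fun a b => b + a) 0 (sb_opp A) (sb_comp A) 1 inv
    (fun a b c => esym (addA c b a)) sb_addr0 sb_addrN compA comp1 compV
    (fun a b c => etrans (sb_compDr a c b) (esym (addA _ _ _))).

Lemma sb_op_trivial : sb_trivial sb_op -> sb_almost_trivial A.
Proof. by []. Qed.

Lemma sb_almost_trivial_weakly_trivial : sb_almost_trivial A -> sb_weakly_trivial A.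
Proof.
move=> atA x _; elim=> [a b | | u v _ -> _ -> | u _ ->] //=; last exact: sb_opp0.
by rewrite /star_with atA sb_addrK addN.
Qed.

(* In a brace A^2 and A_op^2 have the same generators a * b. *)
Lemma sb_brace_weakly_trivial_star a b :
  sb_is_brace A -> sb_weakly_trivial A -> star_with A (sb_add A) (sb_opp A) a b = 0.
Proof.
move=> braceA wtA; apply: wtA; first exact: sq_gen.
have -> : star_with A (sb_add A) (sb_opp A) a b =
          star_with A (fun x y => y + x) (sb_opp A) a b.
  by rewrite /star_with braceA [- a + _]braceA.
exact: sq_gen.
Qed.

End SkewBraceTheory.

Lemma sol_iso_flip (X Y : Type) (r : X * X -> X * X) (s : Y * Y -> Y * Y) :
  sol_iso r s -> flip_solution s -> flip_solution r.
Proof.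
move=> [f [/bij_inj f_inj iso_rs]] flip_s x y; move: (iso_rs x y).
by rewrite flip_s => -[/f_inj e1 /f_inj e2]; rewrite [LHS]surjective_pairing -e1 -e2.
Qed.

Definition addgroup (T : finType) (A : skew_brace T) : Type := T.
HB.instance Definition _ (T : finType) (A : skew_brace T) := Finite.on (addgroup A).
HB.instance Definition _ (T : finType) (A : skew_brace T) :=
  Finite_isGroup.Build (addgroup A) (@sb_addA _ A) (@sb_add0 _ A) (@sb_addN _ A).

Definition compgroup (T : finType) (A : skew_brace T) : Type := T.
HB.instance Definition _ (T : finType) (A : skew_brace T) := Finite.on (compgroup A).
HB.instance Definition _ (T : finType) (A : skew_brace T) :=
  Finite_isGroup.Build (compgroup A) (@sb_compA _ A) (@sb_comp1 _ A) (@sb_compV _ A).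

Section FiniteSkewBrace.
Variables (T : finType) (A : skew_brace T).
Local Open Scope group_scope.

Lemma card_addgroup : #|[set: addgroup A]| = #|T|.
Proof. by rewrite cardsT; apply: (@bij_eq_card (addgroup A) T id); exists id. Qed.

Lemma card_compgroup : #|[set: compgroup A]| = #|T|.
Proof. by rewrite cardsT; apply: (@bij_eq_card (compgroup A) T id); exists id. Qed.

Lemma compgroup1 : (1 : compgroup A) = sb_one A. Proof. by []. Qed.
Lemma compgroupM (a b : compgroup A) : a * b = sb_comp A a b. Proof. by []. Qed.

Lemma sb_lambda_expg (a : compgroup A) k x :
  iter k (sb_lambda A a) x = sb_lambda A (a ^+ k) x.
Proof.
elim: k => [|k IHk] /=; first by rewrite expg0 compgroup1 sb_one_zero sb_lambda0.
by rewrite IHk expgS compgroupM sb_lambdaM.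
Qed.

Definition sb_lambda_perm (a : T) : {perm addgroup A} :=
  perm (can_inj (sb_lambdaK A a) : injective (sb_lambda A a : addgroup A -> addgroup A)).

Lemma sb_lambda_permE a x : sb_lambda_perm a x = sb_lambda A a x.
Proof. exact: permE. Qed.

Lemma sb_lambda_perm_Aut a : sb_lambda_perm a \in Aut [set: addgroup A].
Proof.
rewrite inE; apply/andP; split; first by apply/subsetP => x; rewrite inE.
by apply/morphicP => x y _ _; rewrite !sb_lambda_permE; apply: sb_lambdaD.
Qed.

Lemma order_sb_lambda_perm_dvd a : #[sb_lambda_perm a] %| #|T|.
Proof.
rewrite order_dvdn; apply/eqP/permP => x; rewrite permX perm1.
have -> : iter #|T| (sb_lambda_perm a) x = iter #|T| (sb_lambda A a) x.
  by elim: #|T| => //= k ->; rewrite sb_lambda_permE.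
rewrite (sb_lambda_expg (a : compgroup A)) -card_compgroup expg_cardG ?inE //.
by rewrite compgroup1 sb_one_zero sb_lambda0.
Qed.

(* lambda_a is an automorphism of the cyclic group (A,+) of order dividing
   #|A|, and #|Aut (A,+)| = totient #|A| is coprime to #|A|. *)
Theorem cyclic_number_trivial_brace : cyclic_number #|T| -> sb_trivial_brace A.
Proof.
move=> cnT; have cycA : cyclic [set: addgroup A].
  by apply: cyclic_number_cyclic; rewrite card_addgroup.
split=> [a b | a b].
  exact: (centsP (cyclic_abelian cycA)) (a : addgroup A) (in_setT _) b (in_setT _).
have T_gt0 : 0 < #|T| by rewrite -card_addgroup cardG_gt0.
have coT := cyclic_number_coprime_totient T_gt0 cnT (dvdnn _).
have : #[sb_lambda_perm a] == 1%N.
  rewrite -dvdn1 -(eqnP coT) dvdn_gcd order_sb_lambda_perm_dvd /=.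
  rewrite -card_addgroup -(card_Aut_cyclic cycA).
  exact: order_dvdG (sb_lambda_perm_Aut a).
rewrite order_eq1 => /eqP lambda_id.
by rewrite sb_compE -sb_lambda_permE lambda_id perm1.
Qed.

Lemma cyclic_sb_one_generator : cyclic [set: addgroup A] -> sb_one_generator A.
Proof.
case/cyclicP => a defA; exists a => S [[S0 SD SN] _] Sa x.
have : (x : addgroup A) \in <[a]> by rewrite -defA inE.
case/cycleP => k ->; elim: k => [|k IHk]; first by rewrite expg0.
by rewrite expgS; apply: SD.
Qed.

Lemma sb_trivial_one_generator_cyclic :
  sb_trivial A -> sb_one_generator A -> cyclic [set: addgroup A].
Proof.
move=> trA [a genA]; apply/cyclicP; exists a; apply/setP => x; rewrite inE; symmetry.
suff subS : sub_skew_brace A (fun y : T => (y : addgroup A) \in <[a : addgroup A]>).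
  exact: genA subS (cycle_id _) x.
split; split=> [|y z|y]; rewrite ?sb_one_zero ?trA ?sb_trivial_inv //;
  by [apply: group1 | apply: groupM | apply: groupVr].
Qed.

End FiniteSkewBrace.

Import GRing.Theory.

Section BraceCounterexamples.
Local Open Scope ring_scope.

Section SquareZeroBrace.
Variables (R : comNzRingType) (c : R).
Hypothesis c2_eq0 : c * c = 0.

Let comp (a b : R) := a + b + c * a * b.
Let inv (a : R) := - a + c * a * a.

Fact square_zero_compA a b d : comp a (comp b d) = comp (comp a b) d.
Proof. rewrite /comp; ring. Qed.

Fact square_zero_comp0 a : comp 0 a = a.
Proof. rewrite /comp; ring. Qed.

Fact square_zero_compV a : comp (inv a) a = 0.
Proof.
have -> : comp (inv a) a = (c * c) * (a * a * a) by rewrite /comp /inv; ring.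
by rewrite c2_eq0 mul0r.
Qed.

Fact square_zero_compDr a b d : comp a (b + d) = comp a b - a + comp a d.
Proof. rewrite /comp; ring. Qed.

Definition square_zero_brace : skew_brace R :=
  @SkewBrace R +%R 0 -%R comp 0 inv (@addrA R) (@add0r R) (@addNr R)
    square_zero_compA square_zero_comp0 square_zero_compV square_zero_compDr.

Lemma square_zero_brace_not_weakly_trivial :
  c != 0 -> ~ sb_weakly_trivial square_zero_brace.
Proof.
move=> c_neq0 wtA.
have braceA : sb_is_brace square_zero_brace by move=> a b; apply: addrC.
have := sb_brace_weakly_trivial_star 1 1 braceA wtA.
rewrite /star_with /= /comp => star11; move/eqP: c_neq0; apply.
by rewrite -star11; ring.
Qed.

End SquareZeroBrace.

Section SemidirectBraces.
Variables (q m : nat) (g : 'Z_q).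
Hypotheses (gm_eq1 : g ^+ m = 1) (m_gt1 : (1 < m)%N).
Local Notation T := ('Z_q * 'Z_m)%type.

Definition sd_twist (y : 'Z_m) : 'Z_q := g ^+ val y.

Lemma sd_twistD y z : sd_twist (y + z) = sd_twist y * sd_twist z.
Proof.
rewrite /sd_twist -exprD -[val (y + z)]/((val y + val z) %% (Zp_trunc m).+2)%N.
by rewrite expr_mod // Zp_cast.
Qed.

Lemma sd_twist0 : sd_twist 0 = 1. Proof. by rewrite /sd_twist expr0. Qed.

Lemma sd_twist1 : sd_twist 1 = g.
Proof. by rewrite /sd_twist /= modn_small // expr1. Qed.

Definition sd_add (a b : T) : T := (a.1 + b.1, a.2 + b.2).
Definition sd_opp (a : T) : T := (- a.1, - a.2).
Definition sd_mul (a b : T) : T := (a.1 + sd_twist a.2 * b.1, a.2 + b.2).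
Definition sd_inv (a : T) : T := (- (sd_twist (- a.2) * a.1), - a.2).

Fact sd_addA a b d : sd_add a (sd_add b d) = sd_add (sd_add a b) d.
Proof. by rewrite /sd_add /= !addrA. Qed.

Fact sd_add0 a : sd_add (0, 0) a = a.
Proof. by case: a => x y; rewrite /sd_add /= !add0r. Qed.

Fact sd_addN a : sd_add (sd_opp a) a = (0, 0).
Proof. by rewrite /sd_add /= !addNr. Qed.

Fact sd_mulA a b d : sd_mul a (sd_mul b d) = sd_mul (sd_mul a b) d.
Proof. by rewrite /sd_mul /= sd_twistD; congr (_, _); ring. Qed.

Fact sd_mul0 a : sd_mul (0, 0) a = a.
Proof. by case: a => x y; rewrite /sd_mul /= sd_twist0 mul1r !add0r. Qed.

Fact sd_mulV a : sd_mul (sd_inv a) a = (0, 0).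
Proof. by rewrite /sd_mul /= !addNr. Qed.

Fact sd_mulDr a b d :
  sd_mul a (sd_add b d) = sd_add (sd_add (sd_mul a b) (sd_opp a)) (sd_mul a d).
Proof. by rewrite /sd_mul /sd_add /sd_opp /=; congr (_, _); ring. Qed.

Fact sd_mulMr a b d :
  sd_mul a (sd_mul b d) = sd_mul (sd_mul (sd_mul a b) (sd_inv a)) (sd_mul a d).
Proof.
rewrite -!sd_mulA; congr (sd_mul a _).
by rewrite [sd_mul (sd_inv a) _]sd_mulA sd_mulV sd_mul0.
Qed.

Definition semidirect_brace : skew_brace T :=
  @SkewBrace T sd_add (0, 0) sd_opp sd_mul (0, 0) sd_inv
    sd_addA sd_add0 sd_addN sd_mulA sd_mul0 sd_mulV sd_mulDr.

Definition semidirect_trivial_brace : skew_brace T :=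
  @SkewBrace T sd_mul (0, 0) sd_inv sd_mul (0, 0) sd_inv
    sd_mulA sd_mul0 sd_mulV sd_mulA sd_mul0 sd_mulV sd_mulMr.

Hypothesis g_neq1 : g != 1.

Lemma semidirect_brace_not_weakly_trivial : ~ sb_weakly_trivial semidirect_brace.
Proof.
move=> wtA; have braceA : sb_is_brace semidirect_brace.
  by move=> a b; rewrite /= /sd_add addrC [a.2 + _]addrC.
have := sb_brace_weakly_trivial_star (0, 1) (1, 0) braceA wtA.
rewrite /star_with /= /sd_add /sd_mul /= sd_twist1 => /(congr1 fst) /= g1_eq0.
have : g - 1 = 0 by rewrite -g1_eq0; ring.
by move/eqP; rewrite subr_eq0 (negPf g_neq1).
Qed.

Lemma semidirect_trivial_brace_not_one_generator :
  ~ sb_one_generator semidirect_trivial_brace.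
Proof.
have trA : sb_trivial semidirect_trivial_brace by [].
move/(sb_trivial_one_generator_cyclic trA) /cyclic_abelian /centsP.
move/(_ (0, 1) (in_setT _) (1, 0) (in_setT _)) /(congr1 fst).
rewrite /= /sd_mul /= sd_twist1 sd_twist0 mulr1 mul1r addr0 add0r => g_eq1.
by move: g_neq1; rewrite g_eq1 eqxx.
Qed.

End SemidirectBraces.

Lemma Zp_mulrn_dvd k d (x : 'Z_k) : (1 < k)%N -> (k %| d)%N -> x *+ d = 0.
Proof.
move=> k_gt1 /dvdnP[e ->].
by rewrite mulnC mulrnA -[x *+ k]mulr_natr pchar_Zp // mulr0 mul0rn.
Qed.

Lemma card_Zp k : (1 < k)%N -> #|{: 'Z_k}| = k.
Proof. by move=> k_gt1; rewrite card_ord Zp_cast. Qed.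

Section ProductBrace.
Variables (p m : nat).
Hypotheses (p_gt1 : (1 < p)%N) (m_gt1 : (1 < m)%N) (p_dvd_m : (p %| m)%N).
Local Notation B := (semidirect_trivial_brace (g := 1 : 'Z_p) (expr1n _ m) m_gt1).

Lemma product_brace_expg (x : addgroup B) k : (x ^+ k)%g = (x.1 *+ k, x.2 *+ k).
Proof.
elim: k => [|k IHk] //; rewrite expgS IHk.
by rewrite [LHS]/(sd_mul _ _ _) /sd_twist expr1n mul1r -!mulrS.
Qed.

(* Every element of ('Z_p * 'Z_m, +) has order dividing m < #|B|. *)
Lemma product_brace_not_one_generator : ~ sb_one_generator B.
Proof.
have trB : sb_trivial B by [].
move/(sb_trivial_one_generator_cyclic trB)/cyclicP => [a defA].
have : (#[a]%g %| m)%N.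
  by rewrite order_dvdn product_brace_expg !Zp_mulrn_dvd // ltnW.
rewrite /order -defA card_addgroup card_prod !card_Zp // => /(dvdn_leq (ltnW m_gt1)).
by rewrite leqNgt ltn_Pmull // ltnW.
Qed.

End ProductBrace.

Lemma Zp_nontrivial_root_of_unity p q : prime p -> prime q -> (p %| q.-1)%N ->
  exists g : 'Z_q, g ^+ p = 1 /\ g != 1.
Proof.
move=> pr_p pr_q p_q1.
have : (p %| #|units_Zp q|)%N by rewrite card_units_Zp ?prime_gt0 // totient_prime.
case/(Cauchy pr_p) => u _ ord_u; exists (val u); split.
  by rewrite -FinRing.val_unitX -ord_u expg_order.
apply: contraTneq (prime_gt1 pr_p) => u_eq1.
by rewrite -ord_u (_ : u = 1%g) ?order1 //; apply: val_inj.
Qed.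

Lemma not_cyclic_number_cases n : (0 < n)%N -> ~ cyclic_number n ->
  (exists p k, [/\ prime p, (0 < k)%N & n = (k * p ^ 2)%N]) \/
  (exists q m (g : 'Z_q), [/\ (1 < q)%N, (1 < m)%N, n = (q * m)%N, g ^+ m = 1 & g != 1]).
Proof.
move=> n_gt0 not_cn.
have [sqf | ] := classic (forall p, prime p -> p %| n -> logn p n = 1)%N; last first.
  move=> /not_all_ex_not[p not_sqf_p].
  have [pr_p not_sqf_p'] := imply_to_and _ _ not_sqf_p.
  have [p_n logn_neq1] := imply_to_and _ _ not_sqf_p'.
  have logn_gt0 : (0 < logn p n)%N by rewrite logn_gt0 mem_primes pr_p n_gt0 p_n.
  have /dvdnP[k def_n] : (p ^ 2 %| n)%N.
    by rewrite pfactor_dvdn //; case: (logn p n) logn_gt0 logn_neq1 => [|[|]].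
  left; exists p, k; split=> //; rewrite lt0n.
  by apply: contraTneq n_gt0 => k_eq0; rewrite def_n k_eq0.
right; apply: NNPP => no_root; apply: not_cn; split=> // p q pr_p pr_q p_n q_n _.
apply/negP => p_q1; apply: no_root.
have [g [gp_eq1 g_neq1]] := Zp_nontrivial_root_of_unity pr_p pr_q p_q1.
have [m def_n] := dvdnP q_n.
have p_m : (p %| m)%N.
  have q1_gt0 : (0 < q.-1)%N by rewrite -ltnS prednK ?prime_gt0 ?prime_gt1.
  have p_lt_q : (p < q)%N.
    by rewrite (leq_ltn_trans (dvdn_leq q1_gt0 p_q1)) // ltn_predL prime_gt0.
  rewrite -(Gauss_dvdl m (_ : coprime p q)) -?def_n //.
  by rewrite prime_coprime // dvdn_prime2 // ltn_eqF.
have m_gt0 : (0 < m)%N.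
  by rewrite lt0n; apply: contraTneq n_gt0 => m_eq0; rewrite def_n m_eq0.
exists q, m, g; split=> //; first exact: prime_gt1.
- exact: leq_trans (prime_gt1 pr_p) (dvdn_leq m_gt0 p_m).
- by rewrite def_n mulnC.
by rewrite -(divnK p_m) mulnC exprM gp_eq1 expr1n.
Qed.

Lemma not_cyclic_number_not_weakly_trivial n : (0 < n)%N -> ~ cyclic_number n ->
  exists (T : finType) (A : skew_brace T), #|T| = n /\ ~ sb_weakly_trivial A.
Proof.
move=> n_gt0 /(not_cyclic_number_cases n_gt0).
case=> [[p [k [pr_p k_gt0 def_n]]] | [q [m [g [q_gt1 m_gt1 def_n gm_eq1 g_neq1]]]]].
  have p_gt1 := prime_gt1 pr_p.
  have kp_lt_n : (k * p < n)%N by rewrite def_n; nia.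
  pose c : 'Z_n := (k * p)%:R.
  have c2_eq0 : c * c = 0.
    have -> : c * c = (k * n)%:R by rewrite -natrM def_n; congr _%:R; nia.
    by rewrite natrM pchar_Zp ?mulr0 //; nia.
  have c_neq0 : c != 0.
    apply/eqP => /(congr1 (@nat_of_ord _)); rewrite /c val_Zp_nat ?modn_small //=; nia.
  exists 'Z_n, (square_zero_brace c2_eq0); split; first by rewrite card_Zp //; nia.
  exact: square_zero_brace_not_weakly_trivial.
exists ('Z_q * 'Z_m)%type, (semidirect_brace gm_eq1 m_gt1); split.
  by rewrite card_prod !card_Zp.
exact: semidirect_brace_not_weakly_trivial.
Qed.

Lemma not_cyclic_number_not_one_generator n : (0 < n)%N -> ~ cyclic_number n ->
  exists (T : finType) (A : skew_brace T), #|T| = n /\ ~ sb_one_generator A.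
Proof.
move=> n_gt0 /(not_cyclic_number_cases n_gt0).
case=> [[p [k [pr_p k_gt0 def_n]]] | [q [m [g [q_gt1 m_gt1 def_n gm_eq1 g_neq1]]]]].
  have p_gt1 := prime_gt1 pr_p.
  have kp_gt1 : (1 < k * p)%N by nia.
  exists ('Z_p * 'Z_(k * p))%type.
  exists (semidirect_trivial_brace (g := 1 : 'Z_p) (expr1n _ _) kp_gt1).
  split; first by rewrite card_prod !card_Zp // def_n; nia.
  by apply: product_brace_not_one_generator => //; apply: dvdn_mull.
exists ('Z_q * 'Z_m)%type, (semidirect_trivial_brace gm_eq1 m_gt1); split.
  by rewrite card_prod !card_Zp.
exact: semidirect_trivial_brace_not_one_generator.
Qed.

End BraceCounterexamples.

Theorem theorem4p1 (n : nat) (n_gt0 : 0 < n) :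
  [<->
    (* (1) *)
    (forall (X : Type) (r : X * X -> X * X),
        sb_solution_of_card n r -> flip_solution r);
    (* (2) *)
    (forall (T : finType) (A : skew_brace T), #|T| = n -> sb_trivial_brace A);
    (* (3) *)
    (forall (T : finType) (A : skew_brace T), #|T| = n -> sb_trivial A);
    (* (4) *)
    (forall (T : finType) (A : skew_brace T), #|T| = n -> sb_almost_trivial A);
    (* (5) *)
    (forall (T : finType) (A : skew_brace T), #|T| = n -> sb_weakly_trivial A);
    (* (6) *)
    (forall (T : finType) (A : skew_brace T), #|T| = n -> sb_one_generator A);
    (* (7) *)
    ((forall p, prime p -> p %| n -> logn p n = 1) /\
     (forall p q, prime p -> prime q -> p %| n -> q %| n -> p != q ->
        ~~ (p %| q.-1)))].
Proof.
tfae.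
- move=> flip_all T A card_T; apply/sb_flip_trivial_brace/(flip_all T (sb_solution A)).
  split; first exact: sb_solution_is_solution.
  by exists T, A; split=> //; exists id; split=> //; exists id.
- by move=> trivial_brace_all T A /(trivial_brace_all T A)[].
- by move=> trivial_all T A card_T; apply/sb_op_trivial/trivial_all.
- move=> almost_trivial_all T A card_T.
  exact/sb_almost_trivial_weakly_trivial/almost_trivial_all.
- move=> weakly_trivial_all; have cn : cyclic_number n.
    apply: NNPP => /(not_cyclic_number_not_weakly_trivial n_gt0)[T [A [card_T]]].
    by apply; apply: weakly_trivial_all.
  move=> T A card_T; apply/cyclic_sb_one_generator/cyclic_number_cyclic.
  by rewrite card_addgroup card_T.
- move=> one_generator_all; apply: NNPP.
  move=> /(not_cyclic_number_not_one_generator n_gt0)[T [A [card_T]]].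
  by apply; apply: one_generator_all.
- move=> cn X r [_ [T [A [card_T iso_rA]]]]; apply: sol_iso_flip iso_rA _.
  by apply/sb_flip_trivial_brace/cyclic_number_trivial_brace; rewrite card_T.
Qed.
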